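(* Let $f:\mathbb{R}^n\to\mathbb{R}^n$ be locally Lipschitz with $f(0)=0$, let $z(t,x)$ denote the solution of $\dot z=f(z)$ with $z(0)=x$, and let $V\in C^1(\mathbb{R}^n;\mathbb{R}^+)$ be a Lyapunov function for $\dot z=f(z)$. Then: (i) There exists a locally Lipschitz positive definite $W:\mathbb{R}^n\to\mathbb{R}^+$ with $W(x)\le-\nabla V(x)f(x)$ for all $x\in\mathbb{R}^n$. (ii) Let $l_f:\mathbb{R}^n\to(0,+\infty)$ be continuous with $l_f(x)\ge\sup\{|f(y)-f(z)|/|y-z|: y\ne z,\ \max\{V(y),V(z)\}\le V(x)\}$ for all $x\ne0$. Then for every $b>0$ there exists a continuous positive definite $\tilde W:\mathbb{R}^n\to\mathbb{R}^+$ such that $V(z(h,x))\le V(x)-h\tilde W(x)$ for all $x\in\mathbb{R}^n$ and all $h\in[0,b/l_f(x)]$. (iii) Let $b>0$, let $l_f$ be as in (ii), let $W$ be a locally Lipschitz positive definite function with $W(x)\le-\nabla V(x)f(x)$ for all $x$, and let $l_W^b:\mathbb{R}^n\to\mathbb{R}^+$ be continuous, positive definite, with $l_W^b(x)\ge\sup\{|W(y)-W(z)|/|y-z|: y\ne z,\ \max\{|y|,|z|\}\le\exp(b)|x|\}$ for all $x\ne0$. If there exist $\varepsilon,c>0$ with $|x|\,l_W^b(x)\le cW(x)$ for all $x\in B_\varepsilon(0)$, then for each $\lambda\in(0,1)$ and each continuous $\varphi:\mathbb{R}^n\to(0,+\infty)$ satisfying $$\varphi(x)\le\min\Big\{\frac{b}{l_f(x)},\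 \frac{(1-\lambda)\exp(-b)W(x)}{|x|\,l_W^b(x)\,l_f(x)}\Big\}\quad\forall x\ne0,$$ one has $V(z(h,x))\le V(x)-\lambda hW(x)$ for all $x\in\mathbb{R}^n$ and $h\in[0,\varphi(x)]$.
   Context: A Lyapunov function for $\dot z=f(z)$ is a positive definite, radially unbounded $V\in C^1(\mathbb{R}^n;\mathbb{R}^+)$ with $\nabla V(x)f(x)<0$ for all $x\ne0$. Positive definite means $V(0)=0$ and $V(x)>0$ for $x\ne0$; radially unbounded means every sublevel set $\{V\le M\}$ is compact. $B_\varepsilon(0)$ is the open ball of radius $\varepsilon$ centered at 0. *)

From Stdlib Require Import Reals.
From mathcomp Require Import ssreflect ssrbool eqtype ssrnat fintype bigop.
From Stdlib Require List.

Open Scope R_scope.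

Definition vec (n : nat) := 'I_n -> R.

Definition vzero {n} : vec n := fun _ => 0.
Definition vadd {n} (x y : vec n) : vec n := fun i => x i + y i.
Definition vsub {n} (x y : vec n) : vec n := fun i => x i - y i.

Definition dot {n} (x y : vec n) : R := \big[Rplus/0]_(i < n) (x i * y i).
Definition norm {n} (x : vec n) : R := sqrt (dot x x).

Definition ball {n} (c : vec n) (r : R) (y : vec n) : Prop := norm (vsub y c) < r.

Definition is_open {n} (U : vec n -> Prop) : Prop :=
  forall x, U x -> exists r, 0 < r /\ forall y, ball x r y -> U y.

Definition compact {n} (S : vec n -> Prop) : Prop :=
  forall (I : Type) (U : I -> vec n -> Prop),
    (forall i, is_open (U i)) ->
    (forall x, S x -> exists i, U i x) ->
    exists l : list I, forall x, S x -> exists i, List.In i l /\ U i x.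

Definition cont_scalar {n} (g : vec n -> R) : Prop :=
  forall x eps, 0 < eps -> exists delta, 0 < delta /\
    forall y, norm (vsub y x) < delta -> Rabs (g y - g x) < eps.

Definition cont_vec {n m} (g : vec n -> vec m) : Prop :=
  forall x eps, 0 < eps -> exists delta, 0 < delta /\
    forall y, norm (vsub y x) < delta -> norm (vsub (g y) (g x)) < eps.

Definition locally_lipschitz_vec {n m} (g : vec n -> vec m) : Prop :=
  forall x, exists r L, 0 < r /\ forall y z, ball x r y -> ball x r z ->
    norm (vsub (g y) (g z)) <= L * norm (vsub y z).

Definition locally_lipschitz_scalar {n} (g : vec n -> R) : Prop :=
  forall x, exists r L, 0 < r /\ forall y z, ball x r y -> ball x r z ->
    Rabs (g y - g z) <= L * norm (vsub y z).

Definition has_gradient {n} (V : vec n -> R) (gradV : vec n -> vec n) : Prop :=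
  forall x eps, 0 < eps -> exists delta, 0 < delta /\
    forall h, norm h < delta ->
      Rabs (V (vadd x h) - V x - dot (gradV x) h) <= eps * norm h.

Definition C1_with_gradient {n} (V : vec n -> R) (gradV : vec n -> vec n) : Prop :=
  has_gradient V gradV /\ cont_vec gradV.

Definition positive_definite {n} (V : vec n -> R) : Prop :=
  V vzero = 0 /\ forall x, x <> vzero -> 0 < V x.

Definition radially_unbounded {n} (V : vec n -> R) : Prop :=
  forall M, compact (fun x => V x <= M).

Definition lyapunov {n} (f : vec n -> vec n) (V : vec n -> R)
    (gradV : vec n -> vec n) : Prop :=
  C1_with_gradient V gradV /\ (forall x, 0 <= V x) /\
  positive_definite V /\ radially_unbounded V /\
  forall x, x <> vzero -> dot (gradV x) (f x) < 0.

Definition is_solution {n} (f : vec n -> vec n) (gam : R -> vec n) (x : vec n)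
    (h : R) : Prop :=
  gam 0 = x /\
  (forall i t, 0 <= t <= h -> continue_in (fun s => gam s i) (fun s => 0 <= s <= h) t) /\
  (forall i t, 0 < t < h -> derivable_pt_lim (fun s => gam s i) t (f (gam t) i)).

From Pilot Require Import Defs.
From HB Require Import structures.
From Stdlib Require Import Reals Lra FunctionalExtensionality Classical.
From mathcomp Require Import ssreflect ssrbool eqtype ssrnat fintype bigop.
Open Scope R_scope.

(* Write g := - <grad V, f> for the decay rate of V along the flow; it is continuous,
   nonnegative and positive off the origin.
   (i)   The infimal convolution  W x = inf_y (g y + |x - y|)  is a 1-Lipschitz
         positive definite minorant of g.
   (ii)  On a time interval of length at most b / l_f(x) a trajectory from x stays in the
         sublevel set {V <= V x}, where |f y| <= l_f(x) |y|; by Gronwall's inequality its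
         norm stays above exp(-b) |x|.  The envelope of g over
         {y | exp(-b) |x| <= |y|, V y <= V x}, with both constraints relaxed into
         penalties, is then a continuous positive definite lower bound for the decay rate
         along the whole piece of trajectory.
   (iii) Before time phi(x) the state moves by at most l_f(x) exp(b) |x| t, so the
         Lipschitz bound l_W^b keeps W above lam W x along the trajectory.
   In each case V(z(h, x)) <= V x - c h follows from a lower bound c on g along the
   trajectory, via the chain rule and the mean value theorem. *)

(* Real addition as a commutative monoid, so that [bigD1] can split one term off a sum. *)
HB.instance Definition _ := Monoid.isComLaw.Build R 0 Rplus
  (fun x y z => Logic.eq_sym (Rplus_assoc x y z)) Rplus_comm Rplus_0_l.

Section FiniteSums.
Context {n : nat}.
Implicit Types F G : 'I_n -> R.

Lemma sumR_scal c F :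
  \big[Rplus/0]_(i < n) (c * F i) = c * \big[Rplus/0]_(i < n) F i.
Proof. by elim/big_rec2: _ => [|i y1 y2 _ ->]; ring. Qed.

Lemma sumR_add F G :
  \big[Rplus/0]_(i < n) (F i + G i)
  = \big[Rplus/0]_(i < n) F i + \big[Rplus/0]_(i < n) G i.
Proof. by elim/big_rec3: _ => [|i y1 y2 y3 _ ->]; ring. Qed.

Lemma sumR_le F G : (forall i, F i <= G i) ->
  \big[Rplus/0]_(i < n) F i <= \big[Rplus/0]_(i < n) G i.
Proof. by move=> FG; apply: big_ind2 => [|*|i _]; [lra|lra|exact: FG]. Qed.

Lemma sumR_nonneg F : (forall i, 0 <= F i) -> 0 <= \big[Rplus/0]_(i < n) F i.
Proof. by move=> F0; apply: big_ind => [|*|i _]; [lra|lra|exact: F0]. Qed.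

Lemma sumR_ge_term F j : (forall i, 0 <= F i) -> F j <= \big[Rplus/0]_(i < n) F i.
Proof.
move=> F0; rewrite (bigD1 j) //= -{1}(Rplus_0_r (F j)).
by apply: Rplus_le_compat_l; apply: big_ind => [|*|i _]; [lra|lra|exact: F0].
Qed.

Lemma sumR_const c : \big[Rplus/0]_(i < n) c = INR n * c.
Proof.
rewrite big_const_ord; elim: n => [|m IH]; first by rewrite /=; ring.
by rewrite S_INR /= IH; ring.
Qed.

End FiniteSums.

Lemma Rabs_le_inv {a b : R} : Rabs a <= b -> - b <= a <= b.
Proof. by move=> ab; have := Rle_abs a; have := Rle_abs (- a); rewrite Rabs_Ropp; lra. Qed.

Lemma nonneg_quadratic_discr A B C :
  0 <= C -> (forall t, 0 <= A - 2 * t * B + t * t * C) -> B * B <= A * C.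
Proof.
move=> C0 q.
have [C_pos|C_zero] : 0 < C \/ C = 0 by lra.
- have := q (B / C).
  have -> : A - 2 * (B / C) * B + B / C * (B / C) * C = (A * C - B * B) / C
    by field; lra.
  move=> /(Rmult_le_compat_r C _ _ (Rlt_le _ _ C_pos)).
  have -> : (A * C - B * B) / C * C = A * C - B * B by field; lra.
  lra.
- rewrite C_zero; case: (Req_dec B 0) => [->|B_nz]; first lra.
  have := q ((A + 1) / (2 * B)).
  have -> : A - 2 * ((A + 1) / (2 * B)) * B + (A + 1) / (2 * B) * ((A + 1) / (2 * B)) * C
            = -1 by rewrite C_zero; field.
  lra.
Qed.

Section InnerProduct.
Context {n : nat}.
Implicit Types a b c u v x y : vec n.

Lemma dot_comm x y : dot x y = dot y x.
Proof. by rewrite /dot; apply: eq_bigr => i _; ring. Qed.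

Lemma dot_self_nonneg x : 0 <= dot x x.
Proof. by apply: sumR_nonneg => i; nra. Qed.

Lemma dot_vadd_l a b c : dot (vadd a b) c = dot a c + dot b c.
Proof. by rewrite /dot -sumR_add; apply: eq_bigr => i _; rewrite /vadd; ring. Qed.

Lemma dot_vadd_r a b c : dot c (vadd a b) = dot c a + dot c b.
Proof. by rewrite dot_comm dot_vadd_l !(dot_comm c). Qed.

Lemma dot_vsub_l a b c : dot (vsub a b) c = dot a c - dot b c.
Proof.
have -> : dot a c - dot b c = dot a c + -1 * dot b c by ring.
by rewrite /dot -sumR_scal -sumR_add; apply: eq_bigr => i _; rewrite /vsub; ring.
Qed.

Lemma dot_vsub_r a b c : dot c (vsub a b) = dot c a - dot c b.
Proof. by rewrite dot_comm dot_vsub_l !(dot_comm c). Qed.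

Lemma dot_scal_r a c t : dot c (fun i => t * a i) = t * dot c a.
Proof. by rewrite /dot -sumR_scal; apply: eq_bigr => i _; ring. Qed.

Lemma dot_scal_l a c t : dot (fun i => t * a i) c = t * dot a c.
Proof. by rewrite dot_comm dot_scal_r dot_comm. Qed.

Lemma dot_zero_r a : dot a vzero = 0.
Proof. by rewrite /dot big1 // => i _; rewrite /vzero; ring. Qed.

Lemma dot_quadratic x y t :
  dot (fun i => x i - t * y i) (fun i => x i - t * y i)
  = dot x x - 2 * t * dot x y + t * t * dot y y.
Proof.
have E i : (x i - t * y i) * (x i - t * y i)
           = x i * x i + ((- 2 * t) * (x i * y i) + (t * t) * (y i * y i)) by ring.
by rewrite /dot (eq_bigr _ (fun i _ => E i)) !sumR_add !sumR_scal; ring.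
Qed.

Lemma norm_nonneg x : 0 <= norm x.
Proof. exact: sqrt_pos. Qed.

Lemma norm_sq x : norm x * norm x = dot x x.
Proof. exact/sqrt_sqrt/dot_self_nonneg. Qed.

Lemma cauchy_schwarz x y : Rabs (dot x y) <= norm x * norm y.
Proof.
rewrite /norm -sqrt_mult ?dot_self_nonneg; [rewrite -sqrt_Rsqr_abs|exact: dot_self_nonneg..].
apply: sqrt_le_1_alt; apply: nonneg_quadratic_discr; first exact: dot_self_nonneg.
by move=> t; rewrite -dot_quadratic; apply: dot_self_nonneg.
Qed.

Lemma dot_le_norm x y : dot x y <= norm x * norm y.
Proof. exact: Rle_trans (Rle_abs _) (cauchy_schwarz x y). Qed.

Lemma norm_le_of_sq v (c : R) : 0 <= c -> dot v v <= c * c -> norm v <= c.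
Proof. by move=> c0 vc; rewrite /norm -(sqrt_square c c0); apply: sqrt_le_1_alt. Qed.

Lemma norm_ge_of_sq v (c : R) : 0 <= c -> c * c <= dot v v -> c <= norm v.
Proof. by move=> c0 vc; rewrite /norm -(sqrt_square c c0); apply: sqrt_le_1_alt. Qed.

Lemma norm_triang a b : norm (vadd a b) <= norm a + norm b.
Proof.
apply: norm_le_of_sq; first by have := norm_nonneg a; have := norm_nonneg b; lra.
rewrite dot_vadd_l !dot_vadd_r (dot_comm b a) -!norm_sq.
by have := dot_le_norm a b; lra.
Qed.

Lemma vsub_split x y z : vsub x z = vadd (vsub x y) (vsub y z).
Proof. by apply: functional_extensionality => i; rewrite /vsub /vadd; ring. Qed.

Lemma norm_vsub_triang x y z : norm (vsub x z) <= norm (vsub x y) + norm (vsub y z).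
Proof. rewrite (vsub_split x y z); exact: norm_triang. Qed.

Lemma norm_vsub_sym x y : norm (vsub x y) = norm (vsub y x).
Proof. by rewrite /norm /dot; congr sqrt; apply: eq_bigr => i _; rewrite /vsub; ring. Qed.

Lemma vsub_zero x : vsub x vzero = x.
Proof. by apply: functional_extensionality => i; rewrite /vsub /vzero; ring. Qed.

Lemma vadd_vsub x y : vadd x (vsub y x) = y.
Proof. by apply: functional_extensionality => i; rewrite /vsub /vadd; ring. Qed.

Lemma vsub_self x : vsub x x = vzero.
Proof. by apply: functional_extensionality => i; rewrite /vsub /vzero; ring. Qed.

Lemma norm_zero : norm (@vzero n) = 0.
Proof. by rewrite /norm dot_zero_r sqrt_0. Qed.

Lemma norm_rev_triang a b : Rabs (norm a - norm b) <= norm (vsub a b).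
Proof.
have := norm_vsub_triang a b vzero; have := norm_vsub_triang b a vzero.
rewrite !vsub_zero (norm_vsub_sym b a) => ? ?; apply: Rabs_le; lra.
Qed.

Lemma abs_coord_le_norm v i : Rabs (v i) <= norm v.
Proof.
apply: norm_ge_of_sq; first exact: Rabs_pos.
rewrite -Rabs_mult Rabs_right; last by apply: Rle_ge; nra.
by rewrite /dot; apply: (sumR_ge_term (fun j => v j * v j)) => j; nra.
Qed.

Lemma norm_pos {x} : x <> vzero -> 0 < norm x.
Proof.
move=> x_nz; have [i xi_nz] : exists i, x i <> 0.
  apply: not_all_ex_not => x0; apply: x_nz; exact: functional_extensionality.
exact: Rlt_le_trans (Rabs_pos_lt _ xi_nz) (abs_coord_le_norm x i).
Qed.

Lemma norm_vsub_pos {x y} : x <> y -> 0 < norm (vsub x y).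
Proof.
move=> xy; apply: norm_pos => E; apply: xy; apply: functional_extensionality => i.
by have := f_equal (fun v => v i) E; rewrite /vsub /vzero; lra.
Qed.

Lemma norm_scal v t : norm (fun i => t * v i) = Rabs t * norm v.
Proof.
rewrite /norm dot_scal_l dot_scal_r -Rmult_assoc sqrt_mult ?sqrt_Rsqr_abs //.
- by apply: Rle_0_sqr.
- exact: dot_self_nonneg.
Qed.

Lemma norm_le_of_coord v e : 0 <= e -> (forall i, Rabs (v i) <= e) -> norm v <= INR n * e.
Proof.
move=> e0 ve; have n0 := pos_INR n.
have n_sq : INR n <= INR n * INR n.
  by case: (Nat.eq_0_gt_0_cases n) => [->|/le_INR] /=; nra.
apply: norm_le_of_sq; first nra.
apply: Rle_trans (_ : INR n * (e * e) <= _); last nra.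
by rewrite -sumR_const; apply: sumR_le => i; have := Rabs_le_inv (ve i); nra.
Qed.

Lemma norm_lt_of_coord v e :
  0 < e -> (forall i, Rabs (v i) <= e / (INR n + 1)) -> norm v < e.
Proof.
move=> e_pos ve; have n0 := pos_INR n.
have e'_pos : 0 < e / (INR n + 1) by apply: Rdiv_lt_0_compat; lra.
apply: Rle_lt_trans (norm_le_of_coord _ _ (Rlt_le _ _ e'_pos) ve) _.
have -> : INR n * (e / (INR n + 1)) = e - e / (INR n + 1) by field; lra.
lra.
Qed.

End InnerProduct.

Lemma lipschitz_continuous {n m} {g : vec n -> vec m} :
  locally_lipschitz_vec g -> cont_vec g.
Proof.
move=> g_lip x eps eps_pos; have [r [L [r_pos Lg]]] := g_lip x.
have K_pos : 0 < Rabs L + 1 by have := Rabs_pos L; lra.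
exists (Rmin r (eps / (Rabs L + 1))); split.
  by apply: Rmin_pos => //; apply: Rdiv_lt_0_compat.
move=> y y_near; have := Rmin_l r (eps / (Rabs L + 1)); have := Rmin_r r (eps / (Rabs L + 1)).
move=> d_le d_le'.
have x_ball : ball x r x by rewrite /ball vsub_self norm_zero.
have := Lg y x ltac:(rewrite /ball; lra) x_ball.
have := Rle_abs L; have := norm_nonneg (vsub y x).
have : (Rabs L + 1) * norm (vsub y x) < eps.
  have -> : eps = (Rabs L + 1) * (eps / (Rabs L + 1)) by field; lra.
  by apply: Rmult_lt_compat_l; lra.
nra.
Qed.

Lemma gradient_continuous {n} {V : vec n -> R} {gV} : has_gradient V gV -> cont_scalar V.
Proof.
move=> V_grad x eps eps_pos; have [d [d_pos Vd]] := V_grad x 1 Rlt_0_1.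
set G := norm (gV x); have G0 : 0 <= G by apply: norm_nonneg.
exists (Rmin d (eps / (G + 2))); split; first by apply: Rmin_pos; [lra|apply: Rdiv_lt_0_compat; lra].
move=> y y_near; have := Rmin_l d (eps / (G + 2)); have := Rmin_r d (eps / (G + 2)).
move=> d_le d_le'.
have := Vd (vsub y x) ltac:(lra); rewrite vadd_vsub => taylor.
have := cauchy_schwarz (gV x) (vsub y x); have := norm_nonneg (vsub y x).
have : (G + 2) * norm (vsub y x) < eps.
  have -> : eps = (G + 2) * (eps / (G + 2)) by field; lra.
  by apply: Rmult_lt_compat_l; lra.
have := Rabs_triang (V y - V x - dot (gV x) (vsub y x)) (dot (gV x) (vsub y x)).
have -> : V y - V x - dot (gV x) (vsub y x) + dot (gV x) (vsub y x) = V y - V x by ring.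
rewrite -/G; nra.
Qed.

Lemma cont_dot {n} {A B : vec n -> vec n} :
  cont_vec A -> cont_vec B -> cont_scalar (fun x => dot (A x) (B x)).
Proof.
move=> A_cont B_cont x eps eps_pos.
set K := norm (A x) + norm (B x) + 1.
have K_pos : 0 < K by have := norm_nonneg (A x); have := norm_nonneg (B x); rewrite /K; lra.
set eta := Rmin 1 (eps / (2 * K)).
have eta_pos : 0 < eta by apply: Rmin_pos; [lra|apply: Rdiv_lt_0_compat; lra].
have eta_K : eta * K <= eps / 2.
  have -> : eps / 2 = eps / (2 * K) * K by field; lra.
  by apply: Rmult_le_compat_r; [lra|apply: Rmin_r].
have [dA [dA_pos HA]] := A_cont x eta eta_pos.
have [dB [dB_pos HB]] := B_cont x eta eta_pos.
exists (Rmin dA dB); split; first exact: Rmin_pos.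
move=> y y_near.
have EA := HA y (Rlt_le_trans _ _ _ y_near (Rmin_l dA dB)).
have EB := HB y (Rlt_le_trans _ _ _ y_near (Rmin_r dA dB)).
have eta1 : eta <= 1 by apply: Rmin_l.
have By : norm (B y) <= norm (B x) + 1.
  by have := norm_vsub_triang (B y) (B x) vzero; rewrite !vsub_zero; lra.
have -> : dot (A y) (B y) - dot (A x) (B x)
          = dot (vsub (A y) (A x)) (B y) + dot (A x) (vsub (B y) (B x)).
  by rewrite dot_vsub_l dot_vsub_r; ring.
apply: Rle_lt_trans (Rabs_triang _ _) _.
have := cauchy_schwarz (vsub (A y) (A x)) (B y).
have := cauchy_schwarz (A x) (vsub (B y) (B x)).
have := norm_nonneg (A x); have := norm_nonneg (B y).
have := norm_nonneg (vsub (A y) (A x)); have := norm_nonneg (vsub (B y) (B x)).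
rewrite /K in eta_K; nra.
Qed.

Definition neg_values {n} (F : vec n -> R) (r : R) : Prop := exists y, r = - Rmax 0 (F y).

Lemma neg_values_bound {n} (F : vec n -> R) : bound (neg_values F).
Proof. by exists 0 => r [y ->]; have := Rmax_l 0 (F y); lra. Qed.

Lemma neg_values_inhabited {n} (F : vec n -> R) : exists r, neg_values F r.
Proof. by exists (- Rmax 0 (F vzero)), vzero. Qed.

(* [inf0 F] is the infimum over all y of max(0, F y); it exists by completeness of R. *)
Definition inf0 {n} (F : vec n -> R) : R :=
  - proj1_sig (completeness _ (neg_values_bound F) (neg_values_inhabited F)).

Lemma inf0_lb {n} (F : vec n -> R) y : inf0 F <= Rmax 0 (F y).
Proof.
rewrite /inf0; case: completeness => m [m_ub _] /=.
have : neg_values F (- Rmax 0 (F y)) by exists y.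
by move=> /m_ub; lra.
Qed.

Lemma inf0_glb {n} (F : vec n -> R) c : (forall y, c <= Rmax 0 (F y)) -> c <= inf0 F.
Proof.
move=> c_lb; rewrite /inf0; case: completeness => m [_ m_lub] /=.
suff : m <= - c by lra.
by apply: m_lub => r [y ->]; have := c_lb y; lra.
Qed.

Lemma inf0_nonneg {n} (F : vec n -> R) : 0 <= inf0 F.
Proof. by apply: inf0_glb => y; apply: Rmax_l. Qed.

Lemma inf0_nonneg_lb {n} (F : vec n -> R) y : 0 <= F y -> inf0 F <= F y.
Proof. by move=> Fy; rewrite -[F y](Rmax_right 0) //; apply: inf0_lb. Qed.

Lemma inf0_shift {n} (F G : vec n -> R) d :
  0 <= d -> (forall y, F y <= G y + d) -> inf0 F <= inf0 G + d.
Proof.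
move=> d0 FG; suff : inf0 F - d <= inf0 G by lra.
apply: inf0_glb => y; have := inf0_lb F y; have := FG y.
have := Rmax_l 0 (F y); have := Rmax_l 0 (G y); have := Rmax_r 0 (G y).
rewrite /Rmax; case: Rle_dec; case: Rle_dec; lra.
Qed.

Lemma compact_pos_lower_bound {n} {g : vec n -> R} {S : vec n -> Prop} {r : R} :
  cont_scalar g -> (forall y, y <> vzero -> 0 < g y) -> Defs.compact S -> 0 < r ->
  exists m, 0 < m /\ forall y, S y -> r <= norm y -> m <= g y.
Proof.
move=> g_cont g_pos S_compact r_pos.
pose U (k : nat) (y : vec n) := / (INR k + 1) < g y \/ norm y < r.
have U_open k : is_open (U k).
  move=> y0 [gy0|ny0].
  - have [d [d_pos gd]] := g_cont y0 (g y0 - / (INR k + 1)) ltac:(lra).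
    exists d; split=> // y /gd /Rabs_def2 [? ?]; left; lra.
  - exists (r - norm y0); split; first lra.
    move=> y y_near; right; rewrite /ball in y_near.
    by have := norm_vsub_triang y y0 vzero; rewrite !vsub_zero; lra.
have U_cover y : S y -> exists k, U k y.
  move=> _; case: (Rlt_le_dec (norm y) r) => ny; first by exists O; right.
  have y_nz : y <> vzero by move=> E; rewrite E norm_zero in ny; lra.
  have [k [gk k_pos]] := archimed_cor1 (g y) (g_pos y y_nz).
  exists k; left; apply: Rlt_trans gk; have := lt_0_INR k k_pos.
  by move=> ?; apply: Rinv_lt_contravar; nra.
have [l l_cover] := S_compact nat U U_open U_cover.
have /List.list_max_le/List.Forall_forall l_max := le_n (List.list_max l).
pose K := List.list_max l.
exists (/ (INR K + 1)); split; first by apply: Rinv_0_lt_compat; have := pos_INR K; lra.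
move=> y Sy ny; have [k [lk [gy|]]] := l_cover y Sy; last lra.
have kK := le_INR _ _ (l_max k lk); have k0 := pos_INR k.
suff inv_le : / (INR K + 1) <= / (INR k + 1) by lra.
by apply: Rinv_le_contravar; rewrite /K; lra.
Qed.

Definition lipschitz_envelope {n} (g : vec n -> R) (x : vec n) : R :=
  inf0 (fun y => g y + norm (vsub x y)).

Section LipschitzEnvelope.
Context {n : nat} (g : vec n -> R).
Hypothesis g_nonneg : forall x, 0 <= g x.

Lemma lipschitz_envelope_le x : lipschitz_envelope g x <= g x.
Proof.
have := inf0_nonneg_lb (fun y => g y + norm (vsub x y)) x.
by rewrite vsub_self norm_zero Rplus_0_r; apply.
Qed.

Lemma lipschitz_envelope_lipschitz x y :
  Rabs (lipschitz_envelope g x - lipschitz_envelope g y) <= norm (vsub x y).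
Proof.
have shift a b : lipschitz_envelope g a <= lipschitz_envelope g b + norm (vsub a b).
  apply: inf0_shift; first exact: norm_nonneg.
  by move=> z; have := norm_vsub_triang a b z; lra.
by have := shift x y; have := shift y x; rewrite (norm_vsub_sym y x) => ? ?; apply: Rabs_le; lra.
Qed.

(* Near a point x != 0 the function g stays above g x / 2, while far from x the
   distance term is large; hence the envelope is positive at x. *)
Lemma lipschitz_envelope_pos x :
  cont_scalar g -> (forall y, y <> vzero -> 0 < g y) -> x <> vzero ->
  0 < lipschitz_envelope g x.
Proof.
move=> g_cont g_pos x_nz; have gx := g_pos x x_nz.
have [d [d_pos gd]] := g_cont x (g x / 2) ltac:(lra).
apply: Rlt_le_trans (inf0_glb _ (Rmin (g x / 2) d) _); first by apply: Rmin_pos; lra.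
move=> y; rewrite Rmax_right; last by have := g_nonneg y; have := norm_nonneg (vsub x y); lra.
have := Rmin_l (g x / 2) d; have := Rmin_r (g x / 2) d.
have := g_nonneg y; have := norm_nonneg (vsub x y); rewrite norm_vsub_sym.
case: (Rlt_le_dec (norm (vsub y x)) d) => [/gd /Rabs_def2|]; lra.
Qed.

End LipschitzEnvelope.

Lemma lipschitz_minorant {n} (g : vec n -> R) :
  cont_scalar g -> (forall x, 0 <= g x) -> g vzero = 0 -> (forall x, x <> vzero -> 0 < g x) ->
  exists W : vec n -> R,
    locally_lipschitz_scalar W /\ positive_definite W /\ (forall x, 0 <= W x) /\
    forall x, W x <= g x.
Proof.
move=> g_cont g_nonneg g_zero g_pos.
exists (lipschitz_envelope g); split; [|split; [split|split]].
- move=> x; exists 1, 1; split; first lra.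
  by move=> y z _ _; rewrite Rmult_1_l; apply: lipschitz_envelope_lipschitz.
- apply: Rle_antisym; last exact: inf0_nonneg.
  by rewrite -g_zero; apply: lipschitz_envelope_le.
- by move=> x; apply: lipschitz_envelope_pos.
- by move=> x; apply: inf0_nonneg.
- exact: lipschitz_envelope_le.
Qed.

Lemma Rmax0_shift p q : Rmax 0 p <= Rmax 0 q + Rabs (p - q).
Proof.
apply: Rmax_lub; have := Rmax_l 0 q; have := Rmax_r 0 q; have := Rabs_pos (p - q);
  have := Rle_abs (p - q); lra.
Qed.

(* The lower envelope of g over the region {y | k |x| <= |y| and V y <= V x}; both
   constraints are relaxed into penalties, which makes the envelope continuous in x. *)
Definition sublevel_envelope {n} (g V : vec n -> R) (k : R) (x : vec n) : R :=
  inf0 (fun y => g y + Rmax 0 (k * norm x - norm y) + Rmax 0 (V y - V x)).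

Section SublevelEnvelope.
Context {n : nat} (g V : vec n -> R) (k : R).
Hypothesis g_nonneg : forall y, 0 <= g y.

Lemma sublevel_envelope_le x y :
  k * norm x <= norm y -> V y <= V x -> sublevel_envelope g V k x <= g y.
Proof.
move=> ky Vy; apply: Rle_trans (inf0_nonneg_lb _ y _) _.
- by have := g_nonneg y; have := Rmax_l 0 (k * norm x - norm y);
    have := Rmax_l 0 (V y - V x); lra.
- by rewrite !Rmax_left; lra.
Qed.

Lemma sublevel_envelope_cont :
  0 <= k <= 1 -> cont_scalar V -> cont_scalar (sublevel_envelope g V k).
Proof.
move=> k01 V_cont.
have shift x x' : sublevel_envelope g V k x
    <= sublevel_envelope g V k x' + (Rabs (norm x - norm x') + Rabs (V x - V x')).
  apply: inf0_shift; first by have := Rabs_pos (norm x - norm x'); have := Rabs_pos (V x - V x'); lra.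
  move=> y; have := Rmax0_shift (k * norm x - norm y) (k * norm x' - norm y).
  have := Rmax0_shift (V y - V x) (V y - V x').
  have -> : k * norm x - norm y - (k * norm x' - norm y) = k * (norm x - norm x') by ring.
  have -> : V y - V x - (V y - V x') = - (V x - V x') by ring.
  rewrite Rabs_mult Rabs_Ropp (Rabs_right k); last lra.
  by have := Rabs_pos (norm x - norm x'); nra.
move=> x eps eps_pos; have [d [d_pos Vd]] := V_cont x (eps / 2) ltac:(lra).
exists (Rmin d (eps / 2)); split; first by apply: Rmin_pos; lra.
move=> y y_near; have := Rmin_l d (eps / 2); have := Rmin_r d (eps / 2) => ? ?.
have := Vd y ltac:(lra); have := norm_rev_triang y x.
have := shift y x; have := shift x y.
rewrite (Rabs_minus_sym (norm x)) (Rabs_minus_sym (V x)) => ? ? ? ?.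
apply: Rabs_def1; lra.
Qed.

(* For x != 0 a competitor y either violates a constraint by a fixed amount, or lies in
   a compact sublevel set at distance k |x| / 2 from the origin, where g is bounded below. *)
Lemma sublevel_envelope_pos x :
  0 < k -> cont_scalar g -> (forall y, y <> vzero -> 0 < g y) ->
  (forall M, Defs.compact (fun y => V y <= M)) -> x <> vzero ->
  0 < sublevel_envelope g V k x.
Proof.
move=> k_pos g_cont g_pos V_compact x_nz; have nx := norm_pos x_nz.
pose r := k * norm x / 2; have r_pos : 0 < r by rewrite /r; nra.
have [m [m_pos gm]] := compact_pos_lower_bound g_cont g_pos (V_compact (V x + 1)) r_pos.
apply: Rlt_le_trans (inf0_glb _ (Rmin m (Rmin r 1)) _); first by repeat apply: Rmin_pos; lra.
move=> y; apply: Rle_trans (Rmax_r 0 _).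
have := g_nonneg y; have := Rmax_l 0 (k * norm x - norm y); have := Rmax_l 0 (V y - V x).
have := Rmin_l m (Rmin r 1); have := Rmin_r m (Rmin r 1); have := Rmin_l r 1; have := Rmin_r r 1.
case: (Rle_lt_dec (V y) (V x + 1)) => [Vy|]; last by have := Rmax_r 0 (V y - V x); lra.
case: (Rle_lt_dec r (norm y)) => [ry|]; last by have := Rmax_r 0 (k * norm x - norm y); rewrite /r; lra.
by have := gm y Vy ry; lra.
Qed.

End SublevelEnvelope.

Lemma has_gradient_dot_l {n} (u : vec n) : has_gradient (fun y => dot u y) (fun _ => u).
Proof.
move=> x eps eps_pos; exists 1; split=> [|h _]; first lra.
rewrite dot_vadd_r; have -> : dot u x + dot u h - dot u x - dot u h = 0 by ring.
by rewrite Rabs_R0; have := norm_nonneg h; nra.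
Qed.

Lemma has_gradient_sq {n} : has_gradient (fun y : vec n => dot y y) (fun y i => 2 * y i).
Proof.
move=> x eps eps_pos; exists eps; split=> // h h_small.
have -> : dot (vadd x h) (vadd x h) - dot x x - dot (fun i => 2 * x i) h = norm h * norm h.
  by rewrite norm_sq dot_scal_l dot_vadd_l !dot_vadd_r (dot_comm h x); ring.
by have := norm_nonneg h; rewrite Rabs_right; nra.
Qed.

Definition cont_within (F : R -> R) (a b t : R) : Prop :=
  limit1_in F (fun s => a <= s <= b) (F t) t.

Lemma deriv_linear c t : derivable_pt_lim (fun s => c * s) t c.
Proof.
by have := derivable_pt_lim_scal id c t 1 (derivable_pt_lim_id t); rewrite Rmult_1_r.
Qed.

Lemma derivable_pt_lim_of_error F t l :
  (forall eps, 0 < eps -> exists d, 0 < d /\ forall h, h <> 0 -> Rabs h < d ->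
     Rabs (F (t + h) - F t - h * l) < eps * Rabs h) ->
  derivable_pt_lim F t l.
Proof.
move=> err eps eps_pos; have [d [d_pos Fd]] := err eps eps_pos.
exists (mkposreal _ d_pos) => h h_nz /= hd; have h_pos := Rabs_pos_lt h h_nz.
have -> : (F (t + h) - F t) / h - l = (F (t + h) - F t - h * l) / h by field.
rewrite /Rdiv Rabs_mult Rabs_inv; apply: (Rmult_lt_reg_r (Rabs h)) => //.
by rewrite Rmult_assoc Rinv_l; have := Fd h h_nz hd; lra.
Qed.

Section ContWithin.
Variables (a b t : R).
Implicit Types F G : R -> R.

Lemma cont_within_of_continue_in F :
  continue_in F (fun s => a <= s <= b) t -> cont_within F a b t.
Proof.
move=> F_cont eps eps_pos; have [d [d_pos Fd]] := F_cont eps eps_pos.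
exists d; split=> // s [s_ab st]; case: (Req_dec s t) => [->|s_nz].
- by rewrite /dist /= /R_dist Rminus_diag_eq // Rabs_R0.
- by apply: Fd; split=> //; split=> //; apply: not_eq_sym.
Qed.

Lemma cont_within_of_continuity_pt F : continuity_pt F t -> cont_within F a b t.
Proof.
move=> F_cont; apply: cont_within_of_continue_in => eps /F_cont [d [d_pos Fd]].
by exists d; split=> // s [[_ st] sd]; apply: Fd.
Qed.

Lemma cont_within_sub F a' b' : a <= a' -> b' <= b -> cont_within F a b t -> cont_within F a' b' t.
Proof.
move=> aa' b'b F_cont eps /F_cont [d [d_pos Fd]].
by exists d; split=> // s [s_ab st]; apply: Fd; split=> //; lra.
Qed.

Lemma cont_within_plus F G :
  cont_within F a b t -> cont_within G a b t -> cont_within (fun s => F s + G s) a b t.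
Proof. exact: limit_plus. Qed.

Lemma cont_within_mult F G :
  cont_within F a b t -> cont_within G a b t -> cont_within (fun s => F s * G s) a b t.
Proof. exact: limit_mul. Qed.

Lemma cont_within_opp F : cont_within F a b t -> cont_within (fun s => - F s) a b t.
Proof. exact: limit_Ropp. Qed.

Lemma cont_within_linear c : cont_within (fun s => c * s) a b t.
Proof.
apply: cont_within_of_continuity_pt; apply: derivable_continuous_pt.
by exists c; apply: deriv_linear.
Qed.

End ContWithin.

(* A function continuous on [a, b] with nonpositive derivative on (a, b) is nonincreasing:
   apply the mean value theorem on [a + d, b - d] and let d tend to 0. *)
Lemma deriv_nonpos_nonincreasing (F F' : R -> R) a b : a <= b ->
  (forall t, a <= t <= b -> cont_within F a b t) ->
  (forall t, a < t < b -> derivable_pt_lim F t (F' t)) ->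
  (forall t, a < t < b -> F' t <= 0) -> F b <= F a.
Proof.
move=> ab F_cont F_der F'_nonpos.
case: (Req_dec a b) => [<-|a_ne_b]; first lra.
apply: Rle_plus_epsilon => eps eps_pos.
have [da [da_pos Fa]] := F_cont a ltac:(lra) (eps / 2) ltac:(lra).
have [db [db_pos Fb]] := F_cont b ltac:(lra) (eps / 2) ltac:(lra).
pose m := Rmin (Rmin da db) ((b - a) / 3).
have m_pos : 0 < m by repeat apply: Rmin_pos; lra.
have [m_da m_db m_len] : [/\ m <= da, m <= db & m <= (b - a) / 3].
  split; [apply: Rle_trans (Rmin_l _ _) (Rmin_l _ _)|
          apply: Rle_trans (Rmin_l _ _) (Rmin_r _ _)|apply: Rmin_r].
pose d := m / 2.
have [c [mvt c_in]] := MVT_cor2 F F' (a + d) (b - d) ltac:(rewrite /d; lra)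
  (fun c c_in => F_der c ltac:(rewrite /d in c_in; lra)).
have inner : F (b - d) <= F (a + d).
  by have := F'_nonpos c ltac:(rewrite /d in c_in; lra); rewrite /d in mvt *; nra.
have := Fa (a + d) ltac:(split; [|rewrite /dist /= /R_dist Rabs_right]; rewrite /d; lra).
have := Fb (b - d) ltac:(split; [|rewrite /dist /= /R_dist Rabs_left]; rewrite /d; lra).
by rewrite /dist /= /R_dist => /Rabs_def2 [? ?] /Rabs_def2 [? ?]; lra.
Qed.

Lemma deriv_exp_linear k t : derivable_pt_lim (fun s => exp (k * s)) t (k * exp (k * t)).
Proof.
have := derivable_pt_lim_comp _ exp t k (exp (k * t)) (deriv_linear k t) (derivable_pt_lim_exp _).
by rewrite Rmult_comm.
Qed.

Lemma cont_within_exp_linear k a b t : cont_within (fun s => exp (k * s)) a b t.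
Proof.
apply: cont_within_of_continuity_pt; apply: derivable_continuous_pt.
by exists (k * exp (k * t)); apply: deriv_exp_linear.
Qed.

(* Gronwall's inequality in differential form: N' <= k N forces N s <= N 0 exp (k s),
   because N exp (- k t) is nonincreasing. *)
Lemma gronwall (N N' : R -> R) k s : 0 <= s ->
  (forall t, 0 <= t <= s -> cont_within N 0 s t) ->
  (forall t, 0 < t < s -> derivable_pt_lim N t (N' t)) ->
  (forall t, 0 < t < s -> N' t <= k * N t) ->
  N s <= N 0 * exp (k * s).
Proof.
move=> s0 N_cont N_der N'_le.
have decay : N s * exp (- k * s) <= N 0 * exp (- k * 0).
  apply: (@deriv_nonpos_nonincreasing (fun t => N t * exp (- k * t))
    (fun t => N' t * exp (- k * t) + N t * (- k * exp (- k * t)))) => // t t_in.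
  - by apply: cont_within_mult; [exact: N_cont|exact: cont_within_exp_linear].
  - apply: (derivable_pt_lim_mult N (fun t => exp (- k * t))); first exact: N_der.
    exact: deriv_exp_linear.
  - by have := N'_le t t_in; have := exp_pos (- k * t); nra.
rewrite Rmult_0_r exp_0 Rmult_1_r in decay.
have := Rmult_le_compat_r _ _ _ (Rlt_le _ _ (exp_pos (k * s))) decay.
by rewrite Rmult_assoc -exp_plus (_ : - k * s + k * s = 0) ?exp_0; [lra|ring].
Qed.

Lemma lift_max_widen n (j : 'I_n) : lift ord_max j = widen_ord (leqnSn n) j.
Proof. by apply: val_inj; rewrite /= /bump leqNgt ltn_ord. Qed.

Lemma common_radius {n} (P : 'I_n -> R -> Prop) :
  (forall i d d', 0 < d' <= d -> P i d -> P i d') ->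
  (forall i, exists d, 0 < d /\ P i d) -> exists d, 0 < d /\ forall i, P i d.
Proof.
elim: n P => [|n IH] P P_shrink P_ex; first by exists 1; split; [lra|case].
have [d1 [d1_pos P1]] := IH (fun j => P (widen_ord (leqnSn n) j))
  (fun j => P_shrink _) (fun j => P_ex _).
have [d2 [d2_pos P2]] := P_ex ord_max.
exists (Rmin d1 d2); split; first exact: Rmin_pos.
have d_pos := Rmin_pos _ _ d1_pos d2_pos.
move=> i; case: (unliftP ord_max i) => [j ->|->].
- by rewrite lift_max_widen; apply: (P_shrink _ d1); [split=> //; apply: Rmin_l|apply: P1].
- by apply: (P_shrink _ d2) => //; split=> //; apply: Rmin_r.
Qed.

Section Curves.
Context {n : nat} (G : R -> vec n).

Lemma curve_cont_within a b t :
  (forall i, cont_within (fun s => G s i) a b t) ->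
  forall eps, 0 < eps -> exists d, 0 < d /\
    forall s, a <= s <= b -> Rabs (s - t) < d -> norm (vsub (G s) (G t)) < eps.
Proof.
move=> G_cont eps eps_pos; have n0 := pos_INR n.
have e_pos : 0 < eps / (INR n + 1) by apply: Rdiv_lt_0_compat; lra.
have [d [d_pos Gd]] := common_radius (fun i d => forall s, a <= s <= b -> Rabs (s - t) < d ->
  Rabs (G s i - G t i) < eps / (INR n + 1))
  ltac:(move=> i d d' d'_le Pd s s_in st; apply: Pd => //; lra)
  ltac:(move=> i; have [d [d_pos Gd]] := G_cont i _ e_pos;
        by exists d; split=> // s s_in st; apply: Gd).
by exists d; split=> // s s_in st; apply: norm_lt_of_coord => // i; apply/Rlt_le/Gd.
Qed.

Lemma cont_within_comp (g : vec n -> R) a b t :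
  cont_scalar g -> (forall i, cont_within (fun s => G s i) a b t) ->
  cont_within (fun s => g (G s)) a b t.
Proof.
move=> g_cont G_cont eps eps_pos; have [d1 [d1_pos gd]] := g_cont (G t) eps eps_pos.
have [d2 [d2_pos Gd]] := curve_cont_within a b t G_cont d1 d1_pos.
by exists d2; split=> // s [s_in st]; apply/gd/Gd.
Qed.

Lemma curve_expansion (D : vec n) t :
  (forall i, derivable_pt_lim (fun s => G s i) t (D i)) ->
  forall e, 0 < e -> exists d, 0 < d /\ forall h, h <> 0 -> Rabs h < d ->
    norm (fun i => G (t + h) i - G t i - h * D i) < e * Rabs h.
Proof.
move=> G_der e e_pos; have n0 := pos_INR n.
have e'_pos : 0 < e / (INR n + 1) by apply: Rdiv_lt_0_compat; lra.
have [d [d_pos Gd]] := common_radius (fun i d => forall h, h <> 0 -> Rabs h < d ->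
  Rabs ((G (t + h) i - G t i) / h - D i) < e / (INR n + 1))
  ltac:(move=> i d d' d'_le Pd h h_nz hd; apply: Pd => //; lra)
  ltac:(move=> i; have [d Gd] := G_der i _ e'_pos; exists d; split; [exact: cond_pos|exact: Gd]).
exists d; split=> // h h_nz hd; have h_pos := Rabs_pos_lt h h_nz.
apply: norm_lt_of_coord => [|i]; first nra.
have -> : G (t + h) i - G t i - h * D i = h * ((G (t + h) i - G t i) / h - D i) by field.
rewrite Rabs_mult (_ : e * Rabs h / (INR n + 1) = Rabs h * (e / (INR n + 1))); last by field; lra.
by apply: Rmult_le_compat_l; [lra|apply/Rlt_le/Gd].
Qed.

Lemma chain_rule (V : vec n -> R) gV (D : vec n) t :
  has_gradient V gV -> (forall i, derivable_pt_lim (fun s => G s i) t (D i)) ->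
  derivable_pt_lim (fun s => V (G s)) t (dot (gV (G t)) D).
Proof.
move=> V_grad G_der; apply: derivable_pt_lim_of_error => eps eps_pos.
set a := norm (gV (G t)); set c := norm D.
have a0 : 0 <= a by apply: norm_nonneg.
have c0 : 0 <= c by apply: norm_nonneg.
(* Tolerances for the errors of V and of the curve, each contributing eps / 2. *)
pose e1 := eps / (2 * (c + 1)); pose e2 := Rmin 1 (eps / (2 * (a + 1))).
have e1_pos : 0 < e1 by apply: Rdiv_lt_0_compat; lra.
have e2_pos : 0 < e2 by apply: Rmin_pos; [lra|apply: Rdiv_lt_0_compat; lra].
have e1_c : e1 * (c + 1) = eps / 2 by rewrite /e1; field; lra.
have e2_a : a * e2 < eps / 2.
  apply: Rle_lt_trans (_ : a * (eps / (2 * (a + 1))) < _).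
    by apply: Rmult_le_compat_l => //; apply: Rmin_r.
  have -> : a * (eps / (2 * (a + 1))) = eps / 2 - eps / (2 * (a + 1)) by field; lra.
  have : 0 < eps / (2 * (a + 1)) by apply: Rdiv_lt_0_compat; lra.
  lra.
have [dV [dV_pos Vd]] := V_grad (G t) e1 e1_pos.
have [dG [dG_pos Gd]] := curve_expansion D t G_der e2 e2_pos.
exists (Rmin dG (dV / (c + 1))); split; first by apply: Rmin_pos; [lra|apply: Rdiv_lt_0_compat; lra].
move=> h h_nz hd; have h_pos := Rabs_pos_lt h h_nz.
have hdV : Rabs h * (c + 1) < dV.
  have := Rmin_r dG (dV / (c + 1)) => ?.
  have -> : dV = dV / (c + 1) * (c + 1) by field; lra.
  nra.
pose Rem i := G (t + h) i - G t i - h * D i.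
have Rem_small : norm Rem < e2 * Rabs h by apply: Gd => //; have := Rmin_l dG (dV / (c + 1)); lra.
have incr : vsub (G (t + h)) (G t) = vadd (fun i => h * D i) Rem.
  by apply: functional_extensionality => i; rewrite /vsub /vadd /Rem; ring.
have incr_small : norm (vsub (G (t + h)) (G t)) <= Rabs h * (c + 1).
  rewrite incr; apply: Rle_trans (norm_triang _ _) _; rewrite norm_scal -/c.
  by have := Rmin_l 1 (eps / (2 * (a + 1))); rewrite -/e2; nra.
have V_err := Vd _ (Rle_lt_trans _ _ _ incr_small hdV).
rewrite vadd_vsub incr dot_vadd_r dot_scal_r -incr in V_err.
have Rem_err : Rabs (dot (gV (G t)) Rem) <= a * (e2 * Rabs h).
  by apply: Rle_trans (cauchy_schwarz _ _) _; apply: Rmult_le_compat_l => //; lra.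
have -> : V (G (t + h)) - V (G t) - h * dot (gV (G t)) D
        = (V (G (t + h)) - V (G t) - (h * dot (gV (G t)) D + dot (gV (G t)) Rem))
          + dot (gV (G t)) Rem by ring.
apply: Rle_lt_trans (Rabs_triang _ _) _.
by have := norm_nonneg (vsub (G (t + h)) (G t)); nra.
Qed.

End Curves.

Lemma exp_le a c : a <= c -> exp a <= exp c.
Proof. by case=> [/exp_increasing|->]; lra. Qed.

Section Trajectory.
Context {n : nat} (f : vec n -> vec n) (gam : R -> vec n) (x : vec n) (h : R).
Hypothesis gam_sol : is_solution f gam x h.

Lemma sol_cont_within i a b t :
  0 <= a -> b <= h -> a <= t <= b -> cont_within (fun s => gam s i) a b t.
Proof.
move=> a0 bh t_in; case: gam_sol => _ [gam_cont _].
by apply: (@cont_within_sub 0 h) => //; apply/cont_within_of_continue_in/gam_cont; lra.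
Qed.

Lemma sol_deriv i t : 0 < t < h -> derivable_pt_lim (fun s => gam s i) t (f (gam t) i).
Proof. by case: gam_sol => _ [_ gam_der]; apply: gam_der. Qed.

Lemma sol_decrease V gV c s : has_gradient V gV -> 0 <= s <= h ->
  (forall t, 0 < t < s -> c <= - dot (gV (gam t)) (f (gam t))) ->
  V (gam s) <= V x - c * s.
Proof.
move=> V_grad s_in rate.
have V_cont := gradient_continuous V_grad.
suff decay : V (gam s) + c * s <= V (gam 0) + c * 0 by case: gam_sol decay => -> _; lra.
apply: (@deriv_nonpos_nonincreasing (fun t => V (gam t) + c * t)
  (fun t => dot (gV (gam t)) (f (gam t)) + c)); first lra.
- move=> t t_in; apply: cont_within_plus; last exact: cont_within_linear.
  by apply: cont_within_comp => // i; apply: sol_cont_within; lra.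
- move=> t t_in; apply: derivable_pt_lim_plus; last exact: deriv_linear.
  by apply: chain_rule => // i; apply: sol_deriv; lra.
- by move=> t /rate; lra.
Qed.

Lemma sol_projection u K s : 0 <= s <= h ->
  (forall t, 0 < t < s -> dot u (f (gam t)) <= K) -> dot u (gam s) <= dot u x + K * s.
Proof.
move=> s_in speed.
have proj := sol_decrease (fun y => dot u y) (fun _ => u) (- K) s (has_gradient_dot_l u) s_in.
rewrite -Ropp_mult_distr_l in proj.
suff dec : dot u (gam s) <= dot u x - - (K * s) by lra.
by apply: proj => t /speed ?; lra.
Qed.

(* Gronwall applied to |gam|^2, whose derivative is 2 <gam, f gam>. *)
Lemma sol_norm_sq_bounds L s : 0 <= s <= h ->
  (forall t, 0 < t < s -> Rabs (dot (gam t) (f (gam t))) <= L * dot (gam t) (gam t)) ->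
  dot x x * exp (- (2 * L) * s) <= dot (gam s) (gam s) <= dot x x * exp (2 * L * s).
Proof.
move=> s_in growth.
pose N t := dot (gam t) (gam t); pose N' t := 2 * dot (gam t) (f (gam t)).
have N_cont t : 0 <= t <= s -> cont_within N 0 s t.
  move=> t_in; apply: (cont_within_comp gam (fun y => dot y y)).
    exact: gradient_continuous has_gradient_sq.
  by move=> i; apply: sol_cont_within; lra.
have N_der t : 0 < t < s -> derivable_pt_lim N t (N' t).
  move=> t_in; rewrite /N' -dot_scal_l.
  apply: (chain_rule gam (fun y => dot y y) (fun y i => 2 * y i)); first exact: has_gradient_sq.
  by move=> i; apply: sol_deriv; lra.
have x0 : N 0 = dot x x by rewrite /N; case: gam_sol => ->.
rewrite -x0; split.
- suff lower : - N s <= - N 0 * exp (- (2 * L) * s).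
    by rewrite -Ropp_mult_distr_l /N in lower *; lra.
  apply: (@gronwall (fun t => - N t) (fun t => - N' t) (- (2 * L)) s); first lra.
  + by move=> t /N_cont /cont_within_opp.
  + by move=> t /N_der /derivable_pt_lim_opp.
  + by move=> t /growth /Rabs_le_inv; rewrite /N' /N; lra.
- apply: (@gronwall N N' (2 * L) s); [lra|exact: N_cont|exact: N_der|].
  by move=> t /growth /Rabs_le_inv; rewrite /N' /N; lra.
Qed.

Lemma sol_sublevel V gV s : has_gradient V gV -> (forall y, dot (gV y) (f y) <= 0) ->
  0 <= s <= h -> V (gam s) <= V x.
Proof.
move=> V_grad V_dec s_in.
by have := sol_decrease V gV 0 s V_grad s_in (fun t _ => ltac:(have := V_dec (gam t); lra)); lra.
Qed.

Lemma sol_norm_bounds L b s : 0 <= L -> L * h <= b ->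
  (forall t, 0 < t < h -> norm (f (gam t)) <= L * norm (gam t)) -> 0 <= s <= h ->
  exp (- b) * norm x <= norm (gam s) <= exp b * norm x.
Proof.
move=> L0 Lh_b growth s_in.
have [sq_lower sq_upper] := sol_norm_sq_bounds L s s_in (fun t t_in =>
  ltac:(apply: Rle_trans (cauchy_schwarz _ _) _; rewrite -norm_sq;
        have := growth t ltac:(lra); have := norm_nonneg (gam t); nra)).
have Ls_b : L * s <= b by nra.
have := norm_nonneg x; have := exp_pos b; have := exp_pos (- b) => ? ? ?.
have xx := norm_sq x; split.
- apply: norm_ge_of_sq; first nra.
  have : exp (- b) * exp (- b) <= exp (- (2 * L) * s).
    by rewrite -exp_plus; apply: exp_le; lra.
  by nra.
- apply: norm_le_of_sq; first nra.
  have : exp (2 * L * s) <= exp b * exp b by rewrite -exp_plus; apply: exp_le; lra.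
  by nra.
Qed.

(* With speed at most M the trajectory moves at most M t in time t; test the
   displacement u = gam t - x against itself. *)
Lemma sol_displacement M t : 0 <= M -> 0 <= t <= h ->
  (forall t', 0 < t' < t -> norm (f (gam t')) <= M) -> norm (vsub (gam t) x) <= M * t.
Proof.
move=> M0 t_in speed; set u := vsub (gam t) x; have u0 := norm_nonneg u.
have proj := sol_projection u (norm u * M) t t_in (fun t' t'_in =>
  ltac:(apply: Rle_trans (dot_le_norm _ _) _; apply: Rmult_le_compat_l => //; exact: speed)).
have uu : norm u * norm u <= norm u * (M * t).
  by rewrite norm_sq {2}/u dot_vsub_r -Rmult_assoc; lra.
case: (Req_dec (norm u) 0) => [->|u_nz]; first by nra.
by apply: (Rmult_le_reg_l (norm u)) => //; lra.
Qed.

End Trajectory.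

Lemma le_mul_of_div_le a c d : 0 < d -> a / d <= c -> a <= c * d.
Proof.
move=> d_pos ad; have := Rmult_le_compat_r d _ _ (Rlt_le _ _ d_pos) ad.
by have -> : a / d * d = a by field; lra.
Qed.

Lemma mul_le_of_le_div d h b : 0 < d -> h <= b / d -> d * h <= b.
Proof.
move=> d_pos hb; have := Rmult_le_compat_l d _ _ (Rlt_le _ _ d_pos) hb.
by have -> : d * (b / d) = b by field; lra.
Qed.

Lemma growth_of_ratio_bound {n} (f : vec n -> vec n) (V lf : vec n -> R) x :
  f vzero = vzero -> V vzero = 0 -> (forall y, 0 <= V y) -> x <> vzero ->
  (forall x, x <> vzero -> forall y z, y <> z -> Rmax (V y) (V z) <= V x ->
     norm (vsub (f y) (f z)) / norm (vsub y z) <= lf x) ->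
  forall y, V y <= V x -> norm (f y) <= lf x * norm y.
Proof.
move=> f_zero V_zero V_nonneg x_nz lf_ratio y Vy.
case: (classic (y = vzero)) => [->|y_nz]; first by rewrite f_zero norm_zero; lra.
have := lf_ratio x x_nz y vzero y_nz ltac:(apply: Rmax_lub => //; rewrite V_zero; exact: V_nonneg).
by rewrite f_zero !vsub_zero; apply: le_mul_of_div_le; apply: norm_pos.
Qed.

(* The admissible step size phi(x) of part (iii) makes the first-order change of W along
   the flow at most (1 - lam) W x. *)
Lemma step_size_bound lWx L nx b Wx lam ph :
  0 < lWx -> 0 < L -> 0 < nx ->
  ph <= (1 - lam) * exp (- b) * Wx / (nx * lWx * L) ->
  lWx * (L * exp b * nx) * ph <= (1 - lam) * Wx.
Proof.
move=> lW_pos L_pos nx_pos ph_le.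
have K_pos : 0 < lWx * (L * exp b * nx).
  by repeat apply: Rmult_lt_0_compat => //; exact: exp_pos.
apply: Rle_trans (Rmult_le_compat_l _ _ _ (Rlt_le _ _ K_pos) ph_le) _.
have -> : lWx * (L * exp b * nx) * ((1 - lam) * exp (- b) * Wx / (nx * lWx * L))
          = (1 - lam) * Wx * (exp b * exp (- b)) by field; lra.
by rewrite -exp_plus Rplus_opp_r exp_0; lra.
Qed.

Section LyapunovDecrease.
Context {n : nat} (f : vec n -> vec n) (V : vec n -> R) (gradV : vec n -> vec n).
Hypotheses (f_lip : locally_lipschitz_vec f) (f_zero : f vzero = vzero)
  (V_lyap : lyapunov f V gradV).

Lemma lyap_gradient : has_gradient V gradV.
Proof. by case: V_lyap => [[]]. Qed.

Lemma lyap_nonneg y : 0 <= V y.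
Proof. by case: V_lyap => _ []. Qed.

Lemma lyap_zero : V vzero = 0.
Proof. by case: V_lyap => _ [_ [[]]]. Qed.

Lemma lyap_compact M : Defs.compact (fun y => V y <= M).
Proof. by case: V_lyap => _ [_ [_ []]]. Qed.

Lemma decay_cont : cont_scalar (fun y => - dot (gradV y) (f y)).
Proof.
case: V_lyap => [[_ gV_cont] _] y eps /(cont_dot gV_cont (lipschitz_continuous f_lip) y).
move=> [d [d_pos dd]]; exists d; split=> // z /dd.
by rewrite -Rabs_Ropp; congr (Rabs _ < _); ring.
Qed.

Lemma decay_zero : - dot (gradV vzero) (f vzero) = 0.
Proof. by rewrite f_zero dot_zero_r; ring. Qed.

Lemma decay_pos y : y <> vzero -> 0 < - dot (gradV y) (f y).
Proof. by case: V_lyap => _ [_ [_ [_ V_decr]]] /V_decr; lra. Qed.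

Lemma decay_nonneg y : 0 <= - dot (gradV y) (f y).
Proof.
by case: (classic (y = vzero)) => [->|/decay_pos]; [rewrite decay_zero|]; lra.
Qed.

Lemma lyap_nonincreasing y : dot (gradV y) (f y) <= 0.
Proof. by have := decay_nonneg y; lra. Qed.

Lemma decay_lipschitz_minorant :
  exists W : vec n -> R,
    locally_lipschitz_scalar W /\ positive_definite W /\ (forall x, 0 <= W x) /\
    forall x, W x <= - dot (gradV x) (f x).
Proof. exact: lipschitz_minorant decay_cont decay_nonneg decay_zero decay_pos. Qed.

Lemma lyap_sol_sublevel x h gam s : is_solution f gam x h -> 0 <= s <= h -> V (gam s) <= V x.
Proof.
move=> gam_sol; apply: (sol_sublevel f gam x h gam_sol V gradV);
  [exact: lyap_gradient|exact: lyap_nonincreasing].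
Qed.

Section SampledTrajectory.
Variables (lf : vec n -> R) (b : R) (x : vec n) (h : R) (gam : R -> vec n).
Hypotheses (lf_pos : forall x, 0 < lf x)
  (lf_ratio : forall x, x <> vzero -> forall y z, y <> z -> Rmax (V y) (V z) <= V x ->
     norm (vsub (f y) (f z)) / norm (vsub y z) <= lf x)
  (x_nz : x <> vzero) (h_in : 0 <= h <= b / lf x) (gam_sol : is_solution f gam x h).

Lemma sampled_growth t : 0 <= t <= h -> norm (f (gam t)) <= lf x * norm (gam t).
Proof.
move=> t_in; apply: (growth_of_ratio_bound f V lf) => //.
- exact: lyap_zero.
- exact: lyap_nonneg.
- exact: lyap_sol_sublevel gam_sol t_in.
Qed.

Lemma sampled_norm_bounds s : 0 <= s <= h ->
  exp (- b) * norm x <= norm (gam s) <= exp b * norm x.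
Proof.
apply: (sol_norm_bounds f gam x h gam_sol (lf x)); first exact: Rlt_le.
- by apply: mul_le_of_le_div => //; lra.
- by move=> t t_in; apply: sampled_growth; lra.
Qed.

End SampledTrajectory.

(* Part (ii): the envelope of the decay rate over {y | exp(-b) |x| <= |y|, V y <= V x}
   bounds the decay along every trajectory piece of length at most b / l_f(x), since such
   a piece stays in that region. *)
Lemma decrease_with_continuous_rate (lf : vec n -> R) b :
  (forall x, 0 < lf x) ->
  (forall x, x <> vzero -> forall y z, y <> z -> Rmax (V y) (V z) <= V x ->
     norm (vsub (f y) (f z)) / norm (vsub y z) <= lf x) ->
  0 < b ->
  exists Wt : vec n -> R,
    cont_scalar Wt /\ positive_definite Wt /\ (forall x, 0 <= Wt x) /\
    forall x h, 0 <= h <= b / lf x ->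
    forall gam, is_solution f gam x h -> V (gam h) <= V x - h * Wt x.
Proof.
move=> lf_pos lf_ratio b_pos.
have k_pos : 0 < exp (- b) by apply: exp_pos.
have k_le1 : exp (- b) <= 1 by rewrite -exp_0; apply: exp_le; lra.
pose g y := - dot (gradV y) (f y).
exists (sublevel_envelope g V (exp (- b))); split; [|split; [split|split]].
- apply: sublevel_envelope_cont; first lra.
  exact: gradient_continuous lyap_gradient.
- apply: Rle_antisym; last exact: inf0_nonneg.
  rewrite -decay_zero; apply: sublevel_envelope_le; [exact: decay_nonneg| |lra].
  by rewrite norm_zero; lra.
- move=> x; apply: sublevel_envelope_pos => //;
    [exact: decay_nonneg|exact: decay_cont|exact: decay_pos|exact: lyap_compact].
- by move=> x; apply: inf0_nonneg.
- move=> x h h_in gam gam_sol; rewrite Rmult_comm.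
  apply: (sol_decrease f gam x h gam_sol V gradV); [exact: lyap_gradient|lra|move=> t t_in].
  apply: sublevel_envelope_le; first exact: decay_nonneg.
  + case: (classic (x = vzero)) => [->|x_nz].
      by rewrite norm_zero Rmult_0_r; apply: norm_nonneg.
    by have [] := sampled_norm_bounds lf b x h gam lf_pos lf_ratio x_nz h_in gam_sol t
      ltac:(lra).
  + by apply: lyap_sol_sublevel gam_sol _; lra.
Qed.

Section StepSize.
Variables (b lam : R) (lf W lW phi : vec n -> R).
Hypotheses (b_pos : 0 < b) (lam_in : 0 < lam < 1) (lf_pos : forall x, 0 < lf x)
  (lf_ratio : forall x, x <> vzero -> forall y z, y <> z -> Rmax (V y) (V z) <= V x ->
     norm (vsub (f y) (f z)) / norm (vsub y z) <= lf x)
  (W_pd : positive_definite W) (W_nonneg : forall x, 0 <= W x)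
  (W_le : forall x, W x <= - dot (gradV x) (f x))
  (lW_pd : positive_definite lW)
  (lW_ratio : forall x, x <> vzero -> forall y z, y <> z ->
     Rmax (norm y) (norm z) <= exp b * norm x -> Rabs (W y - W z) / norm (vsub y z) <= lW x)
  (phi_le : forall x, x <> vzero ->
     phi x <= Rmin (b / lf x) ((1 - lam) * exp (- b) * W x / (norm x * lW x * lf x))).

(* Core of part (iii): before time phi(x) the state has moved by at most
   l_f(x) exp(b) |x| t, which by the Lipschitz bound l_W^b changes W by at most
   (1 - lam) W x. *)
Lemma W_fraction_along_flow x h gam t :
  x <> vzero -> 0 <= h <= phi x -> is_solution f gam x h -> 0 < t < h ->
  lam * W x <= W (gam t).
Proof.
move=> x_nz h_in gam_sol t_in.
have L_pos := lf_pos x; have nx := norm_pos x_nz; have eb := exp_pos b.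
have eb1 : 1 <= exp b by rewrite -exp_0; apply: exp_le; lra.
have M_pos : 0 < lf x * exp b * norm x by repeat apply: Rmult_lt_0_compat.
have lW_pos : 0 < lW x by case: lW_pd => _; apply.
have W_x := W_nonneg x.
have phi_x := phi_le x x_nz.
have h_b : 0 <= h <= b / lf x.
  by have := Rmin_l (b / lf x) ((1 - lam) * exp (- b) * W x / (norm x * lW x * lf x)); lra.
have h_W : h <= (1 - lam) * exp (- b) * W x / (norm x * lW x * lf x).
  by have := Rmin_r (b / lf x) ((1 - lam) * exp (- b) * W x / (norm x * lW x * lf x)); lra.
have upper s : 0 <= s <= h -> norm (gam s) <= exp b * norm x.
  by move=> s_in; have [] := sampled_norm_bounds lf b x h gam lf_pos lf_ratio x_nz h_b gam_sol s s_in.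
have disp : norm (vsub (gam t) x) <= lf x * exp b * norm x * t.
  apply: (sol_displacement f gam x h gam_sol); [lra|lra|move=> t' t'_in].
  apply: Rle_trans (sampled_growth lf x h gam lf_ratio x_nz gam_sol t' ltac:(lra)) _.
  rewrite Rmult_assoc.
  by apply: Rmult_le_compat_l; [lra|apply: upper; lra].
case: (classic (gam t = x)) => [->|moved]; first nra.
have W_lip : Rabs (W (gam t) - W x) <= lW x * norm (vsub (gam t) x).
  apply: le_mul_of_div_le; first exact: norm_vsub_pos.
  by apply: lW_ratio => //; apply: Rmax_lub; [apply: upper; lra|nra].
have step := step_size_bound (lW x) (lf x) (norm x) b (W x) lam h lW_pos L_pos nx h_W.
have := Rabs_le_inv W_lip.
have : lW x * norm (vsub (gam t) x) <= lW x * (lf x * exp b * norm x) * h.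
  rewrite Rmult_assoc; apply: Rmult_le_compat_l; first lra.
  by apply: Rle_trans disp _; apply: Rmult_le_compat_l; lra.
lra.
Qed.

(* Part (iii): on a step of length at most phi(x) the decay rate stays above lam W x. *)
Lemma decrease_with_step_size x h : 0 <= h <= phi x ->
  forall gam, is_solution f gam x h -> V (gam h) <= V x - lam * h * W x.
Proof.
move=> h_in gam gam_sol; rewrite (Rmult_comm lam) Rmult_assoc (Rmult_comm h).
apply: (sol_decrease f gam x h gam_sol V gradV); [exact: lyap_gradient|lra|move=> t t_in].
apply: Rle_trans (W_le (gam t)).
case: (classic (x = vzero)) => [->|x_nz]; last exact: (W_fraction_along_flow x h gam t).
by case: W_pd => -> _; rewrite Rmult_0_r; apply: W_nonneg.
Qed.

End StepSize.

End LyapunovDecrease.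

Theorem lemma4p3 (n : nat) (f : vec n -> vec n) (V : vec n -> R)
    (gradV : vec n -> vec n)
    (Hf_lip : locally_lipschitz_vec f) (Hf0 : f vzero = vzero)
    (HV : lyapunov f V gradV) :
  (* (i) *)
  (exists W : vec n -> R,
     locally_lipschitz_scalar W /\ positive_definite W /\ (forall x, 0 <= W x) /\
     forall x, W x <= - dot (gradV x) (f x))
  /\
  (* (ii) *)
  (forall lf : vec n -> R,
     cont_scalar lf -> (forall x, 0 < lf x) ->
     (forall x, x <> vzero -> forall y z, y <> z -> Rmax (V y) (V z) <= V x ->
        norm (vsub (f y) (f z)) / norm (vsub y z) <= lf x) ->
     forall b, 0 < b ->
     exists Wt : vec n -> R,
       cont_scalar Wt /\ positive_definite Wt /\ (forall x, 0 <= Wt x) /\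
       forall x h, 0 <= h <= b / lf x ->
       forall gam, is_solution f gam x h ->
         V (gam h) <= V x - h * Wt x)
  /\
  (* (iii) *)
  (forall (b : R) (lf W lW : vec n -> R),
     0 < b ->
     cont_scalar lf -> (forall x, 0 < lf x) ->
     (forall x, x <> vzero -> forall y z, y <> z -> Rmax (V y) (V z) <= V x ->
        norm (vsub (f y) (f z)) / norm (vsub y z) <= lf x) ->
     locally_lipschitz_scalar W -> positive_definite W -> (forall x, 0 <= W x) ->
     (forall x, W x <= - dot (gradV x) (f x)) ->
     cont_scalar lW -> positive_definite lW -> (forall x, 0 <= lW x) ->
     (forall x, x <> vzero -> forall y z, y <> z ->
        Rmax (norm y) (norm z) <= exp b * norm x ->
        Rabs (W y - W z) / norm (vsub y z) <= lW x) ->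
     (exists eps c, 0 < eps /\ 0 < c /\
        forall x, ball vzero eps x -> norm x * lW x <= c * W x) ->
     forall (lam : R) (phi : vec n -> R),
       0 < lam < 1 ->
       cont_scalar phi -> (forall x, 0 < phi x) ->
       (forall x, x <> vzero ->
          phi x <= Rmin (b / lf x)
                        ((1 - lam) * exp (- b) * W x / (norm x * lW x * lf x))) ->
       forall x h, 0 <= h <= phi x ->
       forall gam, is_solution f gam x h ->
         V (gam h) <= V x - lam * h * W x).
(* The continuity of l_f, l_W^b and phi, the Lipschitz property of W, the positivity of
   phi and the bound |x| l_W^b(x) <= c W(x) near 0 are not needed for these estimates. *)
Proof.
split; [|split].
- exact: decay_lipschitz_minorant f V gradV Hf_lip Hf0 HV.
- move=> lf _ lf_pos lf_ratio b b_pos.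
  exact: decrease_with_continuous_rate f V gradV Hf_lip Hf0 HV lf b lf_pos lf_ratio b_pos.
- move=> b lf W lW b_pos _ lf_pos lf_ratio _ W_pd W_nonneg W_le _ lW_pd _ lW_ratio _
    lam phi lam_in _ _ phi_le.
  exact: decrease_with_step_size f V gradV Hf0 HV b lam lf W lW phi b_pos lam_in lf_pos
    lf_ratio W_pd W_nonneg W_le lW_pd lW_ratio phi_le.
Qed.
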